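(* Let $d\ge 3$ and let $\rho$ be a full-rank density matrix on $\mathbb{C}^D$ depending on parameters $\theta_1,\dots,\theta_d$; write $\rho_0=\rho$ and $\rho_j=\partial_j\rho$ ($j=1,\dots,d$). Let $S$ be the $d\times d$ matrix with $S_{j,j}=1$ for all $j$, $S_{j,j+1}=i$ for $j=1,\dots,d-1$, $S_{d,1}=i$ if $d$ is not a multiple of $4$ and $S_{d,1}=-i$ if $d$ is a multiple of $4$, and all other entries $0$; let $T=S^{-1}$. For real numbers $\mathbf z=(z_{l,k})_{0\le l\le d,\,1\le k\le d}\in\mathbb R^{d(d+1)}$ and Hermitian $D\times D$ matrices $\xi_1,\dots,\xi_d$ define $$\Gamma_j=\sum_{k=1}^d T_{k,j}\Big(\sum_{l=0}^d z_{l,k}\rho_l+i\xi_k\Big),\qquad j=1,\dots,d.$$ For a binary string $\boldsymbol\alpha\in\{0,1\}^d$ let $\bar{\boldsymbol\alpha}=\boldsymbol\alpha$ if $d$ is not a multiple of $4$, and let $\bar{\boldsymbol\alpha}$ be $\boldsymbol\alpha$ with its last bit flipped if $d$ is a multiple of $4$, and define $$g_{\boldsymbol\alpha}=-\sum_{j=1}^d z_{j,j}-\sum_{j=1}^d\frac{\delta_{0,\bar\alpha_j}\mathrm{Tr}[\Gamma_j\rho^{-1}\Gamma_j^\dagger]+\delta_{1,\bar\alpha_j}\mathrm{Tr}[\Gamma_j^\dagger\rho^{-1}\Gamma_j]}{2}.$$ Then $$C_{\mathsf H}\ \ge\ \max_{\boldsymbol\alpha\in\{0,1\}^d}\ \max_{\mathbf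 z,\xi_1,\dots,\xi_d} g_{\boldsymbol\alpha}.$$
   Context: $\mathrm{Re}(\cdot)$ and $\mathrm{Im}(\cdot)$ of a matrix are taken entrywise, and $\|\cdot\|_1$ is the trace norm. For a $d$-parameter family of density matrices $\rho$ on $\mathbb{C}^D$, the Holevo Cramér–Rao bound with identity weight matrix is $$C_{\mathsf H}=\min\Big\{\mathrm{Tr}[\mathrm{Re}Z(\mathbf X)]+\|\mathrm{Im}Z(\mathbf X)\|_1\Big\},$$ the minimum taken over tuples $\mathbf X=(X_1,\dots,X_d)$ of Hermitian $D\times D$ matrices with $\mathrm{Tr}[\rho X_j]=0$ and $\mathrm{Tr}[\partial_j\rho\,X_k]=\delta_{jk}$, where $Z_{jk}(\mathbf X)=\mathrm{Tr}[\rho X_jX_k]$. The matrix $S$ is invertible (so $T$ exists). *)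

From HB Require Import structures.
From mathcomp Require Import all_boot all_order all_algebra.
From mathcomp Require Import spectral.
From mathcomp Require Import reals.
From mathcomp.real_closed Require Import complex.
Set Implicit Arguments. Unset Strict Implicit. Unset Printing Implicit Defensive.
Import Order.TTheory GRing.Theory Num.Theory.
Local Open Scope ring_scope.

Section HolevoDefs.
Variable R : realType.
Local Notation C := R[i].

Definition dag m n (A : 'M[C]_(m, n)) : 'M[C]_(n, m) := (map_mx (fun x => x^*) A)^T.

Definition is_hermitian n (A : 'M[C]_n) : Prop := dag A = A.

Definition psd n (A : 'M[C]_n) : Prop :=
  is_hermitian A /\ forall v : 'cV[C]_n, 0 <= (dag v *m A *m v) 0 0.

Definition density n (rho : 'M[C]_n) : Prop := psd rho /\ \tr rho = 1.

(* trace norm = sum of singular values = sum of sqrt of eigenvalues of A^dag A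
   (spectral_diag gives the eigenvalues, with multiplicity, of a normal matrix) *)
Definition tracenorm n (A : 'M[C]_n) : C :=
  \sum_(i < n) sqrtC (spectral_diag (dag A *m A) 0 i).

Definition Zmat d D (rho : 'M[C]_D) (X : 'I_d -> 'M[C]_D) : 'M[C]_d :=
  \matrix_(j < d, k < d) \tr (rho *m X j *m X k).

(* objective of the Holevo bound with identity weight *)
Definition holevo_obj d D (rho : 'M[C]_D) (X : 'I_d -> 'M[C]_D) : C :=
  \tr (map_mx (fun x => 'Re x) (Zmat rho X))
  + tracenorm (map_mx (fun x => 'Im x) (Zmat rho X)).

(* locally unbiased constraints; drho j = partial_j rho *)
Definition feasible d D (rho : 'M[C]_D) (drho : 'I_d -> 'M[C]_D)
  (X : 'I_d -> 'M[C]_D) : Prop :=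
  [/\ forall j, is_hermitian (X j),
      forall j, \tr (rho *m X j) = 0 &
      forall j k, \tr (drho j *m X k) = (j == k)%:R].

(* the matrix S (0-based indices) and T = S^{-1} *)
Definition Smx d : 'M[C]_d :=
  \matrix_(j < d, k < d)
    if j == k then 1
    else if (k : nat) == j.+1 then 'i
    else if ((j : nat) == d.-1) && ((k : nat) == 0%N) then
      (if (4 %| d)%N then - 'i else 'i)
    else 0.

Definition Tmx d : 'M[C]_d := invmx (Smx d).

Definition rho_l d D (rho : 'M[C]_D) (drho : 'I_d -> 'M[C]_D) (l : 'I_d.+1)
  : 'M[C]_D :=
  match unlift ord0 l with Some j => drho j | None => rho end.

Definition Gamma d D (rho : 'M[C]_D) (drho : 'I_d -> 'M[C]_D)
  (z : 'I_d.+1 -> 'I_d -> R) (xi : 'I_d -> 'M[C]_D) (j : 'I_d) : 'M[C]_D :=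
  \sum_(k < d) Tmx d k j *:
     (\sum_(l < d.+1) ((z l k)%:C)%C *: rho_l rho drho l + 'i *: xi k).

Definition alpha_bar d (alpha : 'I_d -> bool) (j : 'I_d) : bool :=
  if (4 %| d)%N && ((j : nat) == d.-1) then ~~ alpha j else alpha j.

Definition g_alpha d D (rho : 'M[C]_D) (drho : 'I_d -> 'M[C]_D)
  (alpha : 'I_d -> bool) (z : 'I_d.+1 -> 'I_d -> R) (xi : 'I_d -> 'M[C]_D) : C :=
  - (\sum_(j < d) ((z (lift ord0 j) j)%:C)%C)
  - \sum_(j < d)
      (if alpha_bar alpha j
       then \tr (dag (Gamma rho drho z xi j) *m invmx rho *m Gamma rho drho z xi j)
       else \tr (Gamma rho drho z xi j *m invmx rho *m dag (Gamma rho drho z xi j)))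
      / 2.

End HolevoDefs.

(* Put A_j = sum_k S_jk X_k.  For every j, expanding the nonnegative trace
   Tr[(A_j rho + Gamma_j^dag) rho^-1 (A_j rho + Gamma_j^dag)^dag] (or the same
   expression with A_j, Gamma_j replaced by their adjoints, according to the bit
   bar alpha_j) gives 0 <= Q_j + 2 Re Tr[A_j Gamma_j] + q_j, where q_j is the j-th
   quadratic term of g_alpha.  Since T = S^-1 and the X_k are locally
   unbiased, the cross terms add up to 2 sum_k z_kk.  Writing S = 1 + iN with N a
   real orthogonal signed cyclic shift, the Q_j add up to 2 Tr[Re Z] - Tr[Im Z W]
   with W = N^T E - E N, E the diagonal matrix of signs of bar alpha.  Finally -W is
   a sum of two orthogonal matrices, and 2 Re Tr[V B] <= 2 |B|_1 for every unitary V
   (Cauchy-Schwarz in an eigenbasis of B^dag B), so -Tr[Im Z W] <= 2 |Im Z|_1. *)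

From HB Require Import structures.
From mathcomp Require Import all_boot all_order all_algebra.
From mathcomp Require Import spectral.
From mathcomp Require Import reals.
From mathcomp.real_closed Require Import complex.
From mathcomp Require Import ring zify.
Import Order.TTheory GRing.Theory Num.Theory.
Local Open Scope ring_scope.
Set Implicit Arguments. Unset Strict Implicit. Unset Printing Implicit Defensive.

Section ConjugateTranspose.
Variable R : realType.
Local Notation C := R[i].

Lemma dagE m n (A : 'M[C]_(m, n)) i j : dag A i j = (A j i)^*.
Proof. by rewrite !mxE. Qed.

Lemma dagK m n (A : 'M[C]_(m, n)) : dag (dag A) = A.
Proof. by apply/matrixP => i j; rewrite !dagE conjCK. Qed.

Lemma dagM m n p (A : 'M[C]_(m, n)) (B : 'M[C]_(n, p)) :
  dag (A *m B) = dag B *m dag A.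
Proof.
apply/matrixP => i j; rewrite dagE !mxE rmorph_sum; apply: eq_bigr => k _.
by rewrite !mxE rmorphM mulrC.
Qed.

Lemma dagD m n (A B : 'M[C]_(m, n)) : dag (A + B) = dag A + dag B.
Proof. by apply/matrixP => i j; rewrite !mxE rmorphD. Qed.

Lemma dagN m n (A : 'M[C]_(m, n)) : dag (- A) = - dag A.
Proof. by apply/matrixP => i j; rewrite !mxE rmorphN. Qed.

Lemma dagZ m n c (A : 'M[C]_(m, n)) : dag (c *: A) = c^* *: dag A.
Proof. by apply/matrixP => i j; rewrite !mxE rmorphM. Qed.

Lemma dag_sum m n I (r : seq I) (P : pred I) (F : I -> 'M[C]_(m, n)) :
  dag (\sum_(i <- r | P i) F i) = \sum_(i <- r | P i) dag (F i).
Proof.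
apply/matrixP => i j; rewrite dagE !summxE rmorph_sum; apply: eq_bigr => k _.
by rewrite !mxE.
Qed.

Lemma dag_invmx n (A : 'M[C]_n) : dag (invmx A) = invmx (dag A).
Proof. by rewrite /dag map_invmx trmx_inv. Qed.

Lemma dag_real m n (A : 'M[C]_(m, n)) : map_mx (@Num.conj C) A = A -> dag A = A^T.
Proof. by rewrite /dag => ->. Qed.

Lemma mxtrace_dag n (A : 'M[C]_n) : \tr (dag A) = (\tr A)^*.
Proof. by rewrite /mxtrace rmorph_sum; apply: eq_bigr => i _; rewrite !mxE. Qed.

Lemma mxtrace_hermitian_mul n (A B : 'M[C]_n) :
  is_hermitian A -> is_hermitian B -> (\tr (A *m B))^* = \tr (A *m B).
Proof. by move=> hA hB; rewrite -mxtrace_dag dagM hA hB mxtrace_mulC. Qed.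

Lemma trC_dag m n (A : 'M[C]_(m, n)) : map_mx (@Num.conj C) A^T = dag A.
Proof. by apply/matrixP => i j; rewrite !mxE. Qed.

Lemma hermitianE n (Z : 'M[C]_n) i j : is_hermitian Z -> (Z i j)^* = Z j i.
Proof. by move=> Z_herm; rewrite -[in RHS]Z_herm !mxE. Qed.

End ConjugateTranspose.

Section SignedDiagonalSums.
Variable R : realType.
Local Notation C := R[i].
Variable n : nat.

Definition sign_diag (b : 'I_n -> bool) : 'M[C]_n :=
  diag_mx (\row_j (if b j then 1 else -1)).

Definition skew_mx (N E : 'M[C]_n) : 'M[C]_n := N^T *m E - E *m N.

Lemma sign_diag_real b : map_mx (@Num.conj C) (sign_diag b) = sign_diag b.
Proof.
apply/matrixP => i j; rewrite !mxE rmorphMn.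
by case: ifP; rewrite ?rmorphN1 ?rmorph1.
Qed.

Lemma sign_diag_sym b : (sign_diag b)^T = sign_diag b.
Proof. exact: tr_diag_mx. Qed.

Lemma sign_diag_invol b : sign_diag b *m sign_diag b = 1%:M.
Proof.
apply/matrixP => i j; rewrite mul_diag_mx !mxE; case: eqP => [->|_].
  by case: (b j); rewrite ?mulr1n ?mulr1 ?mulrNN ?mulr1.
by rewrite !mulr0n mulr0.
Qed.

Lemma skew_mx_anti N E : E^T = E -> (skew_mx N E)^T = - skew_mx N E.
Proof. by move=> E_sym; rewrite linearB /= !trmx_mul trmxK E_sym opprB. Qed.

Lemma sum_signed_diag b (M0 M1 : 'M[C]_n) :
  \sum_j (if b j then (M0 + M1) j j else (M0 - M1) j j) =
  \tr M0 + \tr (sign_diag b *m M1).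
Proof.
rewrite /mxtrace -big_split; apply: eq_bigr => j _.
by rewrite mul_diag_mx !mxE /=; case: (b j); rewrite ?mul1r ?mulN1r.
Qed.

(* conj S = 1 - P and S = 1 + P with P = iN; as P^T P = -1, the part of both
   congruences that does not depend on b has trace 2 Tr Z. *)
Lemma sum_congruence_diag (N S : 'M[C]_n) b (Z : 'M[C]_n) :
  map_mx (@Num.conj C) N = N -> N *m N^T = 1%:M -> S = 1%:M + 'i *: N ->
  \sum_j (if b j then (map_mx (@Num.conj C) S *m Z *m S^T) j j
          else (S *m Z *m dag S) j j)
  = 2 * \tr Z + 'i * \tr (Z *m skew_mx N (sign_diag b)).
Proof.
move=> N_real N_orth S_N; subst S; set P := 'i *: N; set S := 1%:M + P.
have Sbar : map_mx (@Num.conj C) S = 1%:M - P.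
  apply/matrixP => i j; have /matrixP/(_ i j) := N_real; rewrite !mxE => Nij.
  by rewrite rmorphD rmorphM /= conjCi rmorph_nat Nij; ring.
have ST : S^T = 1%:M + P^T by rewrite linearD /= trmx1.
have Sdag : dag S = 1%:M - P^T by rewrite /dag Sbar linearB /= trmx1.
have PtP : P^T *m P = - 1%:M.
  rewrite /P linearZ /= linearZ /= -scalemxAl scalerA -expr2 sqrCi.
  by rewrite (mulmx1C N_orth) scaleN1r.
set Z0 := Z - P *m Z *m P^T; set Z1 := Z *m P^T - P *m Z.
have conjS_Z : map_mx (@Num.conj C) S *m Z *m S^T = Z0 + Z1.
  rewrite Sbar ST !(mulmxBl, mulmxDr, mul1mx, mulmx1).
  by apply/matrixP => i k; rewrite !mxE; ring.
have S_Z : S *m Z *m dag S = Z0 - Z1.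
  rewrite Sdag !(mulmxDl, mulmxBr, mul1mx, mulmx1).
  by apply/matrixP => i k; rewrite !mxE; ring.
rewrite conjS_Z S_Z sum_signed_diag /Z0 raddfB /= mxtrace_mulC mulmxA PtP mulNmx.
rewrite mul1mx raddfN /= opprK mulrDl mul1r /Z1 mulmxBr raddfB /= /P linearZ /=.
rewrite -!scalemxAr -scalemxAl -!scalemxAr !mxtraceZ -mulrBr.
rewrite /skew_mx mulmxBr raddfB /= (mulmxA Z) (mxtrace_mulC (Z *m N^T)).
by rewrite (mxtrace_mulC Z) -(mulmxA (sign_diag b)).
Qed.

End SignedDiagonalSums.

Arguments sign_diag {R n} b.
Arguments sign_diag_real {R n} b.
Arguments sign_diag_sym {R n} b.
Arguments sign_diag_invol {R n} b.

Section HermitianTrace.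
Variable R : realType.
Local Notation C := R[i].
Variable n : nat.

Lemma mxtrace_sym_skew (A W : 'M[C]_n) : A^T = A -> W^T = - W -> \tr (A *m W) = 0.
Proof.
move=> A_sym W_anti; suff : \tr (A *m W) *+ 2 == 0 by rewrite mulrn_eq0 => /eqP.
rewrite mulr2n addr_eq0; apply/eqP.
by rewrite -[LHS]mxtrace_tr trmx_mul A_sym W_anti mxtrace_mulC mulmxN raddfN.
Qed.

Lemma Im_mx_real (Z : 'M[C]_n) :
  map_mx (@Num.conj C) (map_mx (fun x => 'Im x) Z) = map_mx (fun x => 'Im x) Z.
Proof. by apply/matrixP => i j; rewrite !mxE conj_Creal // Creal_Im. Qed.

Lemma mxtrace_hermitian_skew (Z W : 'M[C]_n) : is_hermitian Z -> W^T = - W ->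
  2 * \tr Z + 'i * \tr (Z *m W) =
  2 * \tr (map_mx (fun x => 'Re x) Z) - \tr (map_mx (fun x => 'Im x) Z *m W).
Proof.
move=> Z_herm W_anti.
set ReZ := map_mx (fun x => 'Re x) Z; set ImZ := map_mx (fun x => 'Im x) Z.
have ReZ_sym : ReZ^T = ReZ.
  by apply/matrixP => i j; rewrite !mxE -(hermitianE _ _ Z_herm) Re_conj.
have trImZ : \tr ImZ = 0.
  rewrite /mxtrace big1 // => j _; rewrite mxE ImE hermitianE //.
  by rewrite subrr mulr0 mul0r.
have -> : Z = ReZ + 'i *: ImZ by apply/matrixP => i j; rewrite !mxE -Crect.
rewrite mulmxDl !raddfD /= -scalemxAl !mxtraceZ trImZ (mxtrace_sym_skew ReZ_sym W_anti).
by rewrite mulr0 addr0 add0r mulrA -expr2 sqrCi mulN1r.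
Qed.

End HermitianTrace.

Section TraceInequalities.
Variable R : realType.
Local Notation C := R[i].

Lemma mxtrace_psd_ge0 m n (P : 'M[C]_n) (Y : 'M[C]_(m, n)) :
  psd P -> 0 <= \tr (Y *m P *m dag Y).
Proof.
move=> [_ P_ge0]; apply: sumr_ge0 => i _.
have := P_ge0 (dag (row i Y)); rewrite dagK.
suff -> : (row i Y *m P *m dag (row i Y)) 0 0 = (Y *m P *m dag Y) i i by [].
rewrite !mxE; apply: eq_bigr => k _; rewrite !mxE; congr (_ * _).
by apply: eq_bigr => l _; rewrite !mxE.
Qed.

Lemma psd_invmx n (P : 'M[C]_n) : psd P -> P \in unitmx -> psd (invmx P).
Proof.
move=> [P_herm P_ge0] P_unit.
have Pinv_herm : is_hermitian (invmx P) by rewrite /is_hermitian dag_invmx P_herm.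
split=> // v; have := P_ge0 (invmx P *m v).
by rewrite dagM Pinv_herm -!mulmxA (mulmxA P) mulmxV // mul1mx.
Qed.

(* Expand 0 <= Tr[(A P + G^dag) P^-1 (A P + G^dag)^dag]. *)
Lemma completed_square_ge0 n (P A G : 'M[C]_n) : psd P -> P \in unitmx ->
  0 <= \tr (P *m dag A *m A) + (\tr (A *m G) + (\tr (A *m G))^*)
       + \tr (dag G *m invmx P *m G).
Proof.
move=> P_psd P_unit; have P_herm : dag P = P by case: P_psd.
have := mxtrace_psd_ge0 (A *m P + dag G) (psd_invmx P_psd P_unit).
rewrite dagD dagM dagK P_herm !mulmxDl !mulmxDr !mxtraceD.
rewrite -!mulmxA mulKmx // (mulmxA P) mulmxV // mul1mx -mxtrace_dag dagM.
by rewrite (mxtrace_mulC A) !mulmxA !addrA.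
Qed.

Lemma completed_square_ge0_dag n (P A G : 'M[C]_n) : psd P -> P \in unitmx ->
  0 <= \tr (P *m A *m dag A) + (\tr (A *m G) + (\tr (A *m G))^*)
       + \tr (G *m invmx P *m dag G).
Proof.
move=> P_psd P_unit; have := completed_square_ge0 (dag A) (dag G) P_psd P_unit.
by rewrite !dagK -dagM mxtrace_dag conjCK (mxtrace_mulC G) [_^* + _]addrC.
Qed.

Lemma sum_completed_squares_ge0 m n (P : 'M[C]_n) (b : 'I_m -> bool)
    (A G : 'I_m -> 'M[C]_n) : psd P -> P \in unitmx ->
  0 <= \sum_j (if b j then \tr (P *m dag (A j) *m A j)
               else \tr (P *m A j *m dag (A j)))
       + (\sum_j \tr (A j *m G j) + (\sum_j \tr (A j *m G j))^*)
       + \sum_j (if b j then \tr (dag (G j) *m invmx P *m G j)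
                else \tr (G j *m invmx P *m dag (G j))).
Proof.
move=> P_psd P_unit; rewrite rmorph_sum -!big_split /=; apply: sumr_ge0 => j _.
by case: (b j); [apply: completed_square_ge0 | apply: completed_square_ge0_dag].
Qed.

Lemma dotmx_add_conj_le n (u v : 'rV[C]_n) :
  dotmx u u = 1 -> dotmx u v + (dotmx u v)^* <= 2 * sqrtC (dotmx v v).
Proof.
move=> u1; have CS : `|dotmx u v| <= sqrtC (dotmx u u) * sqrtC (dotmx v v).
  exact: (CauchySchwarz_sqrt (@dotmx _ n) u v).1.
rewrite u1 sqrtC1 mul1r in CS; have := le_trans (leif_Re_Creal _) CS.
by rewrite ReE -(ler_pM2l (ltr0n _ 2)) mulrCA divff ?pnatr_eq0 // mulr1.
Qed.

Lemma dotmx_row n (A B : 'M[C]_n) i : dotmx (row i A) (row i B) = (A *m dag B) i i.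
Proof. by rewrite dotmxE !mxE; apply: eq_bigr => k _; rewrite !mxE. Qed.

Lemma mxtrace_unitary_le_tracenorm n (V B : 'M[C]_n) : V *m dag V = 1%:M ->
  \tr (V *m B) + (\tr (V *m B))^* <= 2 * tracenorm B.
Proof.
move=> V_unitary; rewrite /tracenorm.
set M := dag B *m B; set P := spectralmx M; set lam := spectral_diag M.
have M_normal : M \is normalmx by apply/normalmxP; rewrite trC_dag /M dagM dagK.
have /unitarymxP := spectral_unitarymx M; rewrite trC_dag -/P => P_unitary.
have M_diag : M = dag P *m diag_mx lam *m P.
  by rewrite -trC_dag -invmx_unitary ?spectral_unitarymx //; apply/orthomx_spectralP.
set A := P *m V; set Bp := P *m dag B.
have trE : \tr (V *m B) = \tr (A *m dag Bp).
  rewrite /A /Bp dagM dagK mulmxA [RHS]mxtrace_mulC !mulmxA (mulmx1C P_unitary).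
  by rewrite mul1mx.
have AA : A *m dag A = 1%:M by rewrite /A dagM mulmxA -(mulmxA P) V_unitary mulmx1.
have BB : Bp *m dag Bp = diag_mx lam.
  rewrite /Bp dagM dagK !mulmxA -(mulmxA P) -/M M_diag !mulmxA P_unitary mul1mx.
  by rewrite -mulmxA P_unitary mulmx1.
rewrite trE /mxtrace rmorph_sum -big_split mulr_sumr; apply: ler_sum => i _ /=.
have -> : lam 0 i = dotmx (row i Bp) (row i Bp).
  by rewrite dotmx_row BB mxE eqxx mulr1n.
rewrite -dotmx_row; apply: dotmx_add_conj_le.
by rewrite dotmx_row AA mxE eqxx.
Qed.

(* -skew_mx N E = E N + (- N^T E) is a sum of two unitary matrices. *)
Lemma mxtrace_skew_ge n (N E B : 'M[C]_n) :
  map_mx (@Num.conj C) N = N -> N *m N^T = 1%:M ->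
  map_mx (@Num.conj C) E = E -> E^T = E -> E *m E = 1%:M ->
  map_mx (@Num.conj C) B = B ->
  0 <= 2 * tracenorm B + \tr (B *m skew_mx N E).
Proof.
move=> N_real N_orth E_real E_sym E_inv B_real.
set W := skew_mx N E; set t := \tr (B *m W).
have [dN dE] : dag N = N^T /\ dag E = E by rewrite !dag_real.
have W_dag : dag W = - W.
  by rewrite /W /skew_mx dagD dagN !dagM dN dE -dN dagK opprB addrC.
have t_real : t^* = t.
  rewrite -mxtrace_dag dagM W_dag (dag_real B_real) -mxtrace_tr trmx_mul trmxK.
  by rewrite linearN /= skew_mx_anti // opprK.
have EN_unitary : (E *m N) *m dag (E *m N) = 1%:M.
  by rewrite dagM dN dE mulmxA -(mulmxA E) N_orth mulmx1.
have NtE_unitary : (- (N^T *m E)) *m dag (- (N^T *m E)) = 1%:M.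
  rewrite dagN mulNmx mulmxN opprK dagM -dN dagK dE.
  by rewrite mulmxA -(mulmxA _ E E) E_inv mulmx1 dN (mulmx1C N_orth).
have sum_t : \tr (E *m N *m B) + \tr (- (N^T *m E) *m B) = - t.
  by rewrite /t /W /skew_mx mulmxBr raddfB /= opprB mulNmx raddfN /= !(mxtrace_mulC B).
have := lerD (mxtrace_unitary_le_tracenorm B EN_unitary)
             (mxtrace_unitary_le_tracenorm B NtE_unitary).
rewrite addrACA sum_t -raddfD /= sum_t raddfN /= t_real -subr_ge0.
have -> : 2 * tracenorm B + 2 * tracenorm B - (- t - t) = 2 * (2 * tracenorm B + t).
  by ring.
by rewrite pmulr_rge0 ?ltr0n.
Qed.

End TraceInequalities.

Section SignedShift.
Variable R : realType.
Local Notation C := R[i].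

(* The sign of the wrap-around entry S_{d,1}. *)
Definition shift_sign d (j : 'I_d) : C :=
  if (4 %| d)%N && ((j : nat) == d.-1) then -1 else 1.

Definition signed_shift d : 'M[C]_d :=
  \matrix_(j, k) if k == ordS j then shift_sign j else 0.

Lemma Smx_signed_shift d : (2 <= d)%N -> Smx R d = 1%:M + 'i *: signed_shift d.
Proof.
move=> d_ge2; apply/matrixP => j k; rewrite !mxE /shift_sign -!val_eqE /=.
have [lt_jd lt_kd] := (ltn_ord j, ltn_ord k).
have [lt_j1d | ge_j1d] := ltnP j.+1 d.
  rewrite modn_small //.
  case: (4 %| d)%N => /=; repeat (case: eqP => /= ?); try (exfalso; lia);
    by rewrite ?mulr0 ?mulr1 ?addr0 ?add0r ?mulr1n ?mulr0n.
have j1_eq_d : j.+1 = d by lia.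
rewrite {2}j1_eq_d modnn.
case: (4 %| d)%N => /=; repeat (case: eqP => /= ?); try (exfalso; lia);
  by rewrite ?mulr0 ?mulr1 ?addr0 ?add0r ?mulrN1 ?mulr1n ?mulr0n.
Qed.

Lemma shift_sign_sqr d (j : 'I_d) : shift_sign j * shift_sign j = 1.
Proof. by rewrite /shift_sign; case: ifP; rewrite ?mulrNN mulr1. Qed.

Lemma signed_shift_real d : map_mx (@Num.conj C) (signed_shift d) = signed_shift d.
Proof.
apply/matrixP => j k; rewrite !mxE /shift_sign.
case: ifP => _; last exact: conjC0.
by case: ifP => _; rewrite ?rmorphN1 ?rmorph1.
Qed.

Lemma signed_shift_orthogonal d : signed_shift d *m (signed_shift d)^T = 1%:M.
Proof.
apply/matrixP => j l; rewrite !mxE (bigD1 (ordS j)) //= big1 ?addr0.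
  rewrite !mxE eqxx (inj_eq (can_inj (@ordSK d))).
  by case: (eqVneq j l) => [<-|]; rewrite ?shift_sign_sqr ?mulr0.
by move=> k /negbTE hk; rewrite !mxE hk mul0r.
Qed.

Lemma row_mul_signed_shift d (v : 'rV[C]_d) k :
  (v *m signed_shift d) 0 k = v 0 (ord_pred k) * shift_sign (ord_pred k).
Proof.
rewrite !mxE (bigD1 (ord_pred k)) //= big1 ?addr0; first by rewrite !mxE ord_predK eqxx.
move=> j hj; rewrite !mxE; case: eqP => [e|]; last by rewrite mulr0.
by move: hj; rewrite e ordSK eqxx.
Qed.

Lemma shift_cycle_factor_neq1 m : (if (4 %| m)%N then -1 else 1) * (- 'i : C) ^+ m != 1.
Proof.
have N1_neq1 : (-1 : C) != 1 by rewrite lt_eqF // (lt_trans (ltrN10 _) ltr01).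
have sqrtN1_neq1 (x : C) : x ^+ 2 = -1 -> x != 1.
  by move=> x2; apply: contraTneq N1_neq1 => x1; rewrite negbK -x2 x1 expr1n.
have iN4 : (- 'i : C) ^+ 4 = 1 by rewrite (exprM _ 2 2) sqrrN sqrCi sqrrN expr1n.
rewrite {2}(divn_eq m 4) exprD mulnC exprM iN4 expr1n mul1r /dvdn.
have : (m %% 4 < 4)%N by rewrite ltn_pmod.
case: (m %% 4)%N => [|[|[|[|r]]]] //= _.
- by rewrite expr0 mulr1.
- by rewrite mul1r expr1 sqrtN1_neq1 // sqrrN sqrCi.
- by rewrite mul1r sqrrN sqrCi.
- by rewrite mul1r exprS sqrrN sqrCi mulrN1 opprK sqrtN1_neq1 // sqrCi.
Qed.

(* A row vector v with v S = 0 satisfies v_k = (-i)^k v_0, and going once around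
   the cycle gives v_0 = c (-i)^d v_0 with c (-i)^d != 1. *)
Lemma Smx_unit d : (2 <= d)%N -> Smx R d \in unitmx.
Proof.
case: d => [|d] // d_ge2; rewrite unitmxE unitfE; apply/det0P => -[v v_neq0 vS0].
have v_pred k : v 0 k = - 'i * shift_sign (ord_pred k) * v 0 (ord_pred k).
  have /rowP/(_ k) := vS0; rewrite Smx_signed_shift // mulmxDr mulmx1 -scalemxAr.
  have := row_mul_signed_shift v k; rewrite !mxE => ->.
  by move/eqP; rewrite addr_eq0 => /eqP ->; ring.
have v_pow n : (n < d.+1)%N -> v 0 (inord n) = (- 'i) ^+ n * v 0 ord0.
  elim: n => [|n IHn] lt_nd.
    by rewrite expr0 mul1r; congr (v 0 _); apply: val_inj; rewrite /= inordK.
  have pred_n1 : ord_pred (inord n.+1 : 'I_d.+1) = inord n.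
    by apply: val_inj; rewrite /= !inordK ?addSn ?modnDr ?modn_small //; lia.
  rewrite v_pred pred_n1 IHn; last by lia.
  rewrite /shift_sign inordK; last by lia.
  by rewrite (_ : (n == d) = false) ?andbF ?mulr1 ?exprS ?mulrA //; apply/eqP; lia.
have v0_eq0 : v 0 ord0 = 0.
  have := v_pred ord0.
  have -> : ord_pred (ord0 : 'I_d.+1) = inord d.
    by apply: val_inj; rewrite /= inordK // modn_small.
  rewrite v_pow // /shift_sign inordK // eqxx andbT.
  set c := (if _ then _ else _) => v0E.
  have : (1 - c * (- 'i) ^+ d.+1) * v 0 ord0 = 0.
    by rewrite exprS mulrBl mul1r {1}v0E; ring.
  move/eqP; rewrite mulf_eq0 subr_eq0 eq_sym.
  by rewrite (negbTE (shift_cycle_factor_neq1 _)) => /eqP.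
move/eqP: v_neq0; apply; apply/rowP => k; rewrite mxE.
by rewrite -(inord_val k) v_pow // v0_eq0 mulr0.
Qed.

End SignedShift.

Definition lincomb (R : realType) d D (S : 'M[R[i]]_d) (X : 'I_d -> 'M[R[i]]_D) j
  : 'M[R[i]]_D := \sum_k S j k *: X k.

Section LocallyUnbiasedTuple.
Variable R : realType.
Local Notation C := R[i].
Variables (d D : nat) (rho : 'M[C]_D) (X : 'I_d -> 'M[C]_D).
Hypotheses (rho_herm : is_hermitian rho) (X_herm : forall j, is_hermitian (X j)).
Local Notation Z := (Zmat rho X).

Lemma Zmat_hermitian : is_hermitian Z.
Proof.
apply/matrixP => k m; rewrite !mxE -mxtrace_dag !dagM X_herm X_herm rho_herm.
by rewrite mulmxA mxtrace_mulC mulmxA.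
Qed.

Lemma dag_lincomb (S : 'M[C]_d) j :
  dag (lincomb S X j) = lincomb (map_mx (@Num.conj C) S) X j.
Proof.
by rewrite dag_sum; apply: eq_bigr => k _; rewrite dagZ X_herm mxE.
Qed.

Lemma mxtrace_rho_lincomb (S S' : 'M[C]_d) j :
  \tr (rho *m lincomb S X j *m lincomb S' X j) = (S *m Z *m S'^T) j j.
Proof.
rewrite mulmx_sumr raddf_sum !mxE; apply: eq_bigr => m _; rewrite !mxE mulr_suml.
rewrite /lincomb mulmx_sumr mulmx_suml raddf_sum; apply: eq_bigr => k _.
by rewrite /= -!scalemxAr -scalemxAl !mxtraceZ !mxE; ring.
Qed.

Lemma sum_mxtrace_rho_lincomb_shift (N S : 'M[C]_d) b :
  map_mx (@Num.conj C) N = N -> N *m N^T = 1%:M -> S = 1%:M + 'i *: N ->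
  \sum_j (if b j then \tr (rho *m dag (lincomb S X j) *m lincomb S X j)
          else \tr (rho *m lincomb S X j *m dag (lincomb S X j)))
  = 2 * \tr (map_mx (fun x => 'Re x) Z)
    - \tr (map_mx (fun x => 'Im x) Z *m skew_mx N (sign_diag b)).
Proof.
move=> N_real N_orth S_N.
rewrite -mxtrace_hermitian_skew ?skew_mx_anti ?sign_diag_sym //;
  last exact: Zmat_hermitian.
rewrite -(sum_congruence_diag _ _ N_real N_orth S_N); apply: eq_bigr => j _.
by rewrite dag_lincomb; case: (b j); rewrite mxtrace_rho_lincomb.
Qed.

End LocallyUnbiasedTuple.

Section UnbiasedCrossTerms.
Variable R : realType.
Local Notation C := R[i].

Lemma sum_mxtrace_lincomb_dual d D (S T : 'M[C]_d) (X G : 'I_d -> 'M[C]_D) :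
  T *m S = 1%:M ->
  \sum_j \tr (lincomb S X j *m (\sum_k T k j *: G k)) = \sum_k \tr (X k *m G k).
Proof.
move=> TS; transitivity (\sum_j \sum_k \sum_m S j k * T m j * \tr (X k *m G m)).
  apply: eq_bigr => j _; rewrite mulmx_suml raddf_sum; apply: eq_bigr => k _.
  rewrite /= mulmx_sumr raddf_sum; apply: eq_bigr => m _.
  by rewrite /= -scalemxAl -scalemxAr !mxtraceZ mulrA.
rewrite exchange_big; apply: eq_bigr => k _ /=; rewrite exchange_big.
have dual m : \sum_j S j k * T m j = (m == k)%:R.
  have /matrixP/(_ m k) := TS; rewrite !mxE => <-.
  by apply: eq_bigr => j _; rewrite mulrC.
under eq_bigr => m _ do rewrite -mulr_suml dual.
by rewrite (bigD1 k) //= eqxx mul1r big1 ?addr0 // => m /negbTE ->; rewrite mul0r.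
Qed.

Variables (d D : nat) (rho : 'M[C]_D) (drho X : 'I_d -> 'M[C]_D).
Hypothesis X_feasible : feasible rho drho X.

Lemma mxtrace_feasible_rho_l (z : 'I_d.+1 -> 'I_d -> R) (Y : 'M[C]_D) k :
  \tr (X k *m (\sum_(l < d.+1) ((z l k)%:C)%C *: rho_l rho drho l + Y)) =
  ((z (lift ord0 k) k)%:C)%C + \tr (X k *m Y).
Proof.
case: X_feasible => _ tr_rhoX tr_drhoX.
rewrite mulmxDr raddfD /= mulmx_sumr raddf_sum /= big_ord_recl /=; congr (_ + _).
rewrite /rho_l unlift_none -scalemxAr mxtraceZ mxtrace_mulC tr_rhoX mulr0 add0r.
rewrite (bigD1 k) //= big1 ?addr0 => [|j j_neq_k];
  rewrite liftK -scalemxAr mxtraceZ mxtrace_mulC tr_drhoX.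
  by rewrite eqxx mulr1.
by rewrite (negbTE j_neq_k) mulr0.
Qed.

Lemma mxtrace_lincomb_Gamma_add_conj (S : 'M[C]_d) z (xi : 'I_d -> 'M[C]_D) :
  Tmx R d *m S = 1%:M -> (forall k, is_hermitian (xi k)) ->
  \sum_j \tr (lincomb S X j *m Gamma rho drho z xi j)
  + (\sum_j \tr (lincomb S X j *m Gamma rho drho z xi j))^*
  = 2 * \sum_k ((z (lift ord0 k) k)%:C)%C.
Proof.
move=> TS xi_herm; have [X_herm _ _] := X_feasible.
rewrite /Gamma (sum_mxtrace_lincomb_dual _ _ TS).
under eq_bigr => k _ do rewrite mxtrace_feasible_rho_l -scalemxAr mxtraceZ.
rewrite rmorph_sum -big_split mulr_sumr; apply: eq_bigr => k _ /=.
have z_real : (((z (lift ord0 k) k)%:C)%C : C)^* = ((z (lift ord0 k) k)%:C)%C.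
  exact: conjc_real.
by rewrite rmorphD rmorphM /= conjCi z_real mxtrace_hermitian_mul //; ring.
Qed.

End UnbiasedCrossTerms.

Unset Implicit Arguments. Set Strict Implicit.

Lemma ler_average_bound (F : numFieldType) (a b s w t : F) :
  0 <= 2 * a - t + 2 * s + w -> 0 <= 2 * b + t -> - s - w / 2 <= a + b.
Proof.
move=> h1 h2; rewrite -subr_ge0.
have -> : a + b - (- s - w / 2) = (2 * a - t + 2 * s + w + (2 * b + t)) / 2.
  by field.
by apply: divr_ge0; [apply: addr_ge0 | apply: ler0n].
Qed.

Theorem theorem2 (R : realType) (d D : nat) (hd : (3 <= d)%N)
  (rho : 'M[R[i]]_D) (drho : 'I_d -> 'M[R[i]]_D)
  (Hrho : density rho) (Hfull : rho \in unitmx)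
  (Hdrho : forall j, is_hermitian (drho j)) (Htrd : forall j, \tr (drho j) = 0)
  (alpha : 'I_d -> bool) (z : 'I_d.+1 -> 'I_d -> R)
  (xi : 'I_d -> 'M[R[i]]_D) (Hxi : forall k, is_hermitian (xi k))
  (X : 'I_d -> 'M[R[i]]_D) (HX : feasible rho drho X) :
  g_alpha rho drho alpha z xi <= holevo_obj rho X.
Proof.
have [[rho_psd _] [X_herm _ _]] := (Hrho, HX).
have rho_herm : is_hermitian rho by case: rho_psd.
have [N_real N_orth] := (signed_shift_real R d, signed_shift_orthogonal R d).
have S_N := Smx_signed_shift R (ltnW hd).
have TS : Tmx R d *m Smx R d = 1%:M by rewrite mulVmx // Smx_unit // ltnW.
have := sum_completed_squares_ge0 (alpha_bar alpha) (lincomb (Smx R d) X)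
  (Gamma rho drho z xi) rho_psd Hfull.
rewrite (sum_mxtrace_rho_lincomb_shift rho_herm X_herm _ N_real N_orth S_N).
rewrite (mxtrace_lincomb_Gamma_add_conj HX _ TS Hxi) => squares.
have trace_norm := mxtrace_skew_ge N_real N_orth (sign_diag_real (alpha_bar alpha))
  (sign_diag_sym _) (sign_diag_invol _) (Im_mx_real (Zmat rho X)).
by rewrite /g_alpha -mulr_suml; apply: ler_average_bound squares trace_norm.
Qed.
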